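(* Let $\mathbb A$ be an abelian category with enough projective objects. A morphism $(f_0,f_1):a\to b$ in $\mathbb A^{[1]}_c$, where $a:A_1\to A_0$ and $b:B_1\to B_0$, is cofaithful in $\mathbb A^{[1]}_c$ if and only if the morphism $(f_0,b):A_0\oplus B_1\to B_0$ is an epimorphism in $\mathbb A$.
   Context: Let $\mathbb A$ be an abelian category. The 2-category $\mathbb A^{[1]}$ has as objects the morphisms $a:A_1\to A_0$ of $\mathbb A$. For objects $a:A_1\to A_0$ and $b:B_1\to B_0$, a morphism $a\to b$ is a pair $(f_0,f_1)$ of morphisms $f_i:A_i\to B_i$ of $\mathbb A$ with $b f_1=f_0 a$; composition is componentwise. A 2-arrow $(f_0,f_1)\Rightarrow(g_0,g_1)$ between morphisms $a\to b$ is a morphism $\alpha:A_0\to B_1$ of $\mathbb A$ with $f_1-g_1=\alpha a$ and $f_0-g_0=b\alpha$; vertical composition is addition of such $\alpha$'s, and whiskering is given by $(h_0,h_1)\circ\alpha=h_1\alpha$ and $\alpha\circ(e_0,e_1)=\alpha e_0$. All 2-arrows are invertible, so each $\mathbf{Hom}(a,b)$ is a groupoid. $\mathbb A^{[1]}_c$ is the full 2-subcategory of $\mathbb A^{[1]}$ on the objects $a:A_1\to A_0$ with $A_0$ projective in $\mathbb A$. A morphism $f:a\to b$ of $\mathbb A^{[1]}_c$ is cofaithful in $\mathbb A^{[1]}_c$ if for every object $x$ of $\mathbb A^{[1]}_c$ the functor $-\circ f:\mathbf{Hom}(b,x)\to\mathbf{Hom}(a,x)$ is faithful. *)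

From Stdlib Require Import Setoid.

Set Implicit Arguments.

Record PreAdd := {
  Ob : Type;
  Hom : Ob -> Ob -> Type;
  comp : forall A B C : Ob, Hom B C -> Hom A B -> Hom A C;
  idm : forall A : Ob, Hom A A;
  zero : forall A B : Ob, Hom A B;
  add : forall A B : Ob, Hom A B -> Hom A B -> Hom A B;
  opp : forall A B : Ob, Hom A B -> Hom A B;
  comp_assoc : forall A B C D (h : Hom C D) (g : Hom B C) (f : Hom A B),
      comp h (comp g f) = comp (comp h g) f;
  comp_id_l : forall A B (f : Hom A B), comp (idm B) f = f;
  comp_id_r : forall A B (f : Hom A B), comp f (idm A) = f;
  add_assoc : forall A B (f g h : Hom A B), add f (add g h) = add (add f g) h;
  add_comm : forall A B (f g : Hom A B), add f g = add g f;
  add_0l : forall A B (f : Hom A B), add (zero A B) f = f;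
  add_oppr : forall A B (f : Hom A B), add f (opp f) = zero A B;
  comp_add_l : forall A B C (g1 g2 : Hom B C) (f : Hom A B),
      comp (add g1 g2) f = add (comp g1 f) (comp g2 f);
  comp_add_r : forall A B C (g : Hom B C) (f1 f2 : Hom A B),
      comp g (add f1 f2) = add (comp g f1) (comp g f2);
  bp : Ob -> Ob -> Ob;
  bp_i1 : forall A B, Hom A (bp A B);
  bp_i2 : forall A B, Hom B (bp A B);
  bp_p1 : forall A B, Hom (bp A B) A;
  bp_p2 : forall A B, Hom (bp A B) B;
  bp_p1i1 : forall A B, comp (bp_p1 A B) (bp_i1 A B) = idm A;
  bp_p2i2 : forall A B, comp (bp_p2 A B) (bp_i2 A B) = idm B;
  bp_p1i2 : forall A B, comp (bp_p1 A B) (bp_i2 A B) = zero B A;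
  bp_p2i1 : forall A B, comp (bp_p2 A B) (bp_i1 A B) = zero A B;
  bp_sum : forall A B, add (comp (bp_i1 A B) (bp_p1 A B))
                           (comp (bp_i2 A B) (bp_p2 A B)) = idm (bp A B)
}.

Arguments comp {p A B C} _ _.
Arguments idm {p} A.
Arguments zero {p} A B.
Arguments add {p A B} _ _.
Arguments opp {p A B} _.
Arguments bp {p} _ _.
Arguments bp_i1 {p} A B.
Arguments bp_i2 {p} A B.
Arguments bp_p1 {p} A B.
Arguments bp_p2 {p} A B.

Section Basic.
Variable C : PreAdd.

Definition sub {A B : Ob C} (f g : Hom C A B) : Hom C A B := add f (opp g).

Definition mono {A B : Ob C} (m : Hom C A B) : Prop :=
  forall T (u v : Hom C T A), comp m u = comp m v -> u = v.

Definition epi {A B : Ob C} (e : Hom C A B) : Prop :=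
  forall T (u v : Hom C B T), comp u e = comp v e -> u = v.

Definition is_kernel {K A B : Ob C} (f : Hom C A B) (k : Hom C K A) : Prop :=
  comp f k = zero K B /\
  forall T (t : Hom C T A), comp f t = zero T B ->
    exists u : Hom C T K, comp k u = t /\
      forall u' : Hom C T K, comp k u' = t -> u' = u.

Definition is_cokernel {A B Q : Ob C} (f : Hom C A B) (q : Hom C B Q) : Prop :=
  comp q f = zero A Q /\
  forall T (t : Hom C B T), comp t f = zero A T ->
    exists u : Hom C Q T, comp u q = t /\
      forall u' : Hom C Q T, comp u' q = t -> u' = u.

Definition copair {A B X : Ob C} (f : Hom C A X) (g : Hom C B X)
  : Hom C (bp A B) X :=
  add (comp f (bp_p1 A B)) (comp g (bp_p2 A B)).

Definition projective (P : Ob C) : Prop :=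
  forall (E X : Ob C) (e : Hom C E X), epi e ->
    forall p : Hom C P X, exists q : Hom C P E, comp e q = p.

End Basic.

Arguments sub {C A B} _ _.
Arguments mono {C A B} _.
Arguments epi {C A B} _.
Arguments is_kernel {C K A B} _ _.
Arguments is_cokernel {C A B Q} _ _.
Arguments copair {C A B X} _ _.
Arguments projective {C} _.

Record AbCat := {
  ab_pa :> PreAdd;
  ab_zero_obj : exists Z : Ob ab_pa, idm Z = zero Z Z;
  ab_kernels : forall A B (f : Hom ab_pa A B),
      exists K (k : Hom ab_pa K A), is_kernel f k;
  ab_cokernels : forall A B (f : Hom ab_pa A B),
      exists Q (q : Hom ab_pa B Q), is_cokernel f q;
  ab_mono_normal : forall A B (m : Hom ab_pa A B), mono m ->
      exists Q (g : Hom ab_pa B Q), is_kernel g m;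
  ab_epi_normal : forall A B (e : Hom ab_pa A B), epi e ->
      exists K (g : Hom ab_pa K A), is_cokernel g e
}.

Definition enough_projectives (C : AbCat) : Prop :=
  forall X : Ob C, exists (P : Ob C) (e : Hom C P X), projective P /\ epi e.

Section Alg.
Variable C : PreAdd.

Lemma add_0r A B (f : Hom C A B) : add f (zero A B) = f.
Proof. rewrite add_comm; apply add_0l. Qed.

Lemma add_cancel_l A B (x y z : Hom C A B) : add x y = add x z -> y = z.
Proof.
  intro H.
  assert (E : add (opp x) (add x y) = add (opp x) (add x z)) by (rewrite H; reflexivity).
  rewrite !add_assoc, (@add_comm _ _ _ (opp x) x), !add_oppr, !add_0l in E. exact E.
Qed.

Lemma comp_zero_l A B D (f : Hom C A B) : comp (zero B D) f = zero A D.
Proof.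
  apply (@add_cancel_l _ _ (comp (zero B D) f)).
  rewrite <- comp_add_l, add_0l, add_0r. reflexivity.
Qed.

Lemma comp_zero_r A B D (g : Hom C B D) : comp g (zero A B) = zero A D.
Proof.
  apply (@add_cancel_l _ _ (comp g (zero A B))).
  rewrite <- comp_add_r, add_0l, add_0r. reflexivity.
Qed.

Lemma comp_opp_l A B D (g : Hom C B D) (f : Hom C A B) :
  comp (opp g) f = opp (comp g f).
Proof.
  apply (@add_cancel_l _ _ (comp g f)).
  rewrite <- comp_add_l, !add_oppr, comp_zero_l. reflexivity.
Qed.

Lemma comp_sub_l A B D (g h : Hom C B D) (f : Hom C A B) :
  comp (sub g h) f = sub (comp g f) (comp h f).
Proof. unfold sub. rewrite comp_add_l, comp_opp_l. reflexivity. Qed.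
End Alg.

Section Arrows.
Variable C : AbCat.

Record Arr := { A1 : Ob C; A0 : Ob C; arr : Hom C A1 A0 }.

Record ArrMor (a b : Arr) := {
  m0 : Hom C (A0 a) (A0 b);
  m1 : Hom C (A1 a) (A1 b);
  m_comm : comp (arr b) m1 = comp m0 (arr a)
}.
Arguments m0 {a b} _.
Arguments m1 {a b} _.

Record TwoCell (a b : Arr) (f g : ArrMor a b) := {
  tc : Hom C (A0 a) (A1 b);
  tc1 : sub (m1 f) (m1 g) = comp tc (arr a);
  tc0 : sub (m0 f) (m0 g) = comp (arr b) tc
}.
Arguments tc {a b f g} _.

Lemma mor_comp_comm (a b x : Arr) (g : ArrMor b x) (f : ArrMor a b) :
  comp (arr x) (comp (m1 g) (m1 f)) = comp (comp (m0 g) (m0 f)) (arr a).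
Proof.
  rewrite comp_assoc, (m_comm g), <- comp_assoc, (m_comm f), comp_assoc.
  reflexivity.
Qed.

Definition mor_comp (a b x : Arr) (g : ArrMor b x) (f : ArrMor a b) : ArrMor a x :=
  {| m0 := comp (m0 g) (m0 f); m1 := comp (m1 g) (m1 f);
     m_comm := mor_comp_comm g f |}.

Lemma whisk_tc1 (a b x : Arr) (g h : ArrMor b x) (al : TwoCell g h) (f : ArrMor a b) :
  sub (m1 (mor_comp g f)) (m1 (mor_comp h f)) = comp (comp (tc al) (m0 f)) (arr a).
Proof.
  simpl. rewrite <- comp_sub_l, (tc1 al), <- !comp_assoc, (m_comm f).
  reflexivity.
Qed.

Lemma whisk_tc0 (a b x : Arr) (g h : ArrMor b x) (al : TwoCell g h) (f : ArrMor a b) :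
  sub (m0 (mor_comp g f)) (m0 (mor_comp h f)) = comp (arr x) (comp (tc al) (m0 f)).
Proof.
  simpl. rewrite <- comp_sub_l, (tc0 al), comp_assoc. reflexivity.
Qed.

Definition whiskerR (a b x : Arr) (g h : ArrMor b x) (al : TwoCell g h)
  (f : ArrMor a b) : TwoCell (mor_comp g f) (mor_comp h f) :=
  {| tc := comp (tc al) (m0 f); tc1 := whisk_tc1 al f; tc0 := whisk_tc0 al f |}.

Record ArrC := { carr :> Arr; cproj : projective (A0 carr) }.

(** f : a -> b is cofaithful in A^[1]_c : for every object x of A^[1]_c the
    functor - ∘ f : Hom(b, x) -> Hom(a, x) is faithful, i.e. injective on
    2-arrows between any two parallel morphisms b -> x. *)
Definition cofaithful_c (a b : ArrC) (f : ArrMor a b) : Prop :=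
  forall (x : ArrC) (g h : ArrMor b x) (al be : TwoCell g h),
    whiskerR al f = whiskerR be f -> al = be.

End Arrows.

Arguments m0 {C a b} _.
Arguments m1 {C a b} _.
Arguments tc {C a b f g} _.
Arguments mor_comp {C a b x} _ _.
Arguments whiskerR {C a b x g h} _ _.
Arguments cofaithful_c {C a b} _.
Arguments arr {C} _.

(** Both conditions say that no nonzero w : B0 -> T is killed by both f0 and b.
    - In a preadditive category, e is epi iff w ∘ e = 0 forces w = 0, and
      w ∘ (f0, b) = 0 iff w ∘ f0 = 0 and w ∘ b = 0 ([copair_epi_iff]).
    - The 2-arrows between two parallel morphisms b -> x all have the same
      composite with b, and whiskering by f multiplies them by f0; so if (f0, b)
      is epi, whiskering by f is injective ([cofaithful_of_copair_epi]).
    - Conversely, if w kills f0 and b, then w is a 2-arrow from the zero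
      morphism b -> x to itself, where x is the object T -> 0 of A^[1]_c (a
      zero object is projective); its whiskering by f is the zero 2-arrow, so
      cofaithfulness forces w = 0 ([cofaithful_kills]). *)
From Stdlib Require Import ProofIrrelevance.

Section Preadditive.
Context {C : PreAdd}.

Lemma sub_self A B (u : Hom C A B) : sub u u = zero A B.
Proof. unfold sub. apply add_oppr. Qed.

Lemma sub_zero_eq A B (u v : Hom C A B) : sub u v = zero A B -> u = v.
Proof.
  unfold sub; intro H. apply (@add_cancel_l C _ _ (opp v)).
  rewrite add_comm, H, add_comm, add_oppr. reflexivity.
Qed.

Lemma epi_iff_cancel_zero A B (e : Hom C A B) :
  epi e <-> forall T (w : Hom C B T), comp w e = zero A T -> w = zero B T.
Proof.
  split.
  - intros He T w Hw. apply He. rewrite Hw, comp_zero_l. reflexivity.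
  - intros Hz T u v Huv. apply sub_zero_eq, Hz.
    rewrite comp_sub_l, Huv. apply sub_self.
Qed.

Lemma copair_comp {A B X T} (f : Hom C A X) (g : Hom C B X) (u : Hom C X T) :
  comp u (copair f g) = copair (comp u f) (comp u g).
Proof. unfold copair. rewrite comp_add_r, !comp_assoc. reflexivity. Qed.

Lemma copair_i1 {A B X} (f : Hom C A X) (g : Hom C B X) :
  comp (copair f g) (bp_i1 A B) = f.
Proof.
  unfold copair. rewrite comp_add_l, <- !comp_assoc, bp_p1i1, bp_p2i1,
    comp_zero_r, comp_id_r, add_0r. reflexivity.
Qed.

Lemma copair_i2 {A B X} (f : Hom C A X) (g : Hom C B X) :
  comp (copair f g) (bp_i2 A B) = g.
Proof.
  unfold copair. rewrite comp_add_l, <- !comp_assoc, bp_p1i2, bp_p2i2,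
    comp_zero_r, comp_id_r, add_0l. reflexivity.
Qed.

Lemma copair_epi_iff A B X (f : Hom C A X) (g : Hom C B X) :
  epi (copair f g) <->
  forall T (w : Hom C X T), comp w f = zero A T -> comp w g = zero B T ->
    w = zero X T.
Proof.
  rewrite epi_iff_cancel_zero. split.
  - intros Hz T w Hf Hg. apply Hz.
    rewrite copair_comp, Hf, Hg. unfold copair.
    rewrite !comp_zero_l, add_0l. reflexivity.
  - intros Hz T w Hw. apply Hz.
    + rewrite <- (copair_i1 f g), comp_assoc, Hw. apply comp_zero_l.
    + rewrite <- (copair_i2 f g), comp_assoc, Hw. apply comp_zero_l.
Qed.

Lemma zero_projective {Z : Ob C} : idm Z = zero Z Z -> projective Z.
Proof.
  intros HZ E X e _ p. exists (zero Z E).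
  rewrite comp_zero_r, <- (comp_id_r _ _ _ p), HZ, comp_zero_r. reflexivity.
Qed.

End Preadditive.

Section TwoArrows.
Context {C : AbCat}.

Lemma twocell_eq {a b : Arr C} {g h : ArrMor a b} (al be : TwoCell g h) :
  tc al = tc be -> al = be.
Proof.
  destruct al as [t1 p1 q1], be as [t2 p2 q2]; simpl; intro H; subst.
  f_equal; apply proof_irrelevance.
Qed.

(** Parallel 2-arrows g => h agree after composition with the source arrow:
    both composites equal g1 - h1. *)
Lemma twocell_comp_arr {a b : Arr C} {g h : ArrMor a b} (al be : TwoCell g h) :
  comp (tc al) (arr a) = comp (tc be) (arr a).
Proof. rewrite <- (tc1 al), <- (tc1 be). reflexivity. Qed.

Lemma zero_mor_comm (a b : Arr C) :
  comp (arr b) (zero (A1 a) (A1 b)) = comp (zero (A0 a) (A0 b)) (arr a).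
Proof. rewrite comp_zero_r, comp_zero_l. reflexivity. Qed.

Definition zero_mor (a b : Arr C) : ArrMor a b :=
  {| m0 := zero _ _; m1 := zero _ _; m_comm := zero_mor_comm a b |}.

Section NullCell.
Variables (a b : Arr C) (w : Hom C (A0 a) (A1 b)).
Hypotheses (Hwa : comp w (arr a) = zero (A1 a) (A1 b))
           (Hbw : comp (arr b) w = zero (A0 a) (A0 b)).

Lemma null_cell_tc1 : sub (m1 (zero_mor a b)) (m1 (zero_mor a b)) = comp w (arr a).
Proof. rewrite Hwa. apply sub_self. Qed.

Lemma null_cell_tc0 : sub (m0 (zero_mor a b)) (m0 (zero_mor a b)) = comp (arr b) w.
Proof. rewrite Hbw. apply sub_self. Qed.

Definition null_cell : TwoCell (zero_mor a b) (zero_mor a b) :=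
  {| tc := w; tc1 := null_cell_tc1; tc0 := null_cell_tc0 |}.
End NullCell.

Lemma cofaithful_of_copair_epi {a b : ArrC C} {f : ArrMor a b} :
  epi (copair (m0 f) (arr b)) -> cofaithful_c f.
Proof.
  intros He x g h al be Hw. apply twocell_eq, He.
  assert (Hf : comp (tc al) (m0 f) = comp (tc be) (m0 f)).
  { change (tc (whiskerR al f) = tc (whiskerR be f)). rewrite Hw. reflexivity. }
  rewrite !copair_comp, Hf, (twocell_comp_arr al be). reflexivity.
Qed.

(** If f is cofaithful, no nonzero w : B0 -> T annihilates both f0 and b:
    test against the object T -> 0 of A^[1]_c. *)
Lemma cofaithful_kills {a b : ArrC C} {f : ArrMor a b} :
  cofaithful_c f ->
  forall T (w : Hom C (A0 b) T),
    comp w (m0 f) = zero (A0 a) T -> comp w (arr b) = zero (A1 b) T ->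
    w = zero (A0 b) T.
Proof.
  intros Hcf T w Hwf Hwb.
  destruct (ab_zero_obj C) as [Z HZ].
  set (x := {| carr := {| A1 := T; A0 := Z; arr := zero T Z |};
               cproj := zero_projective HZ |} : ArrC C).
  assert (Hxw : comp (arr x) w = zero (A0 b) (A0 x)) by apply comp_zero_l.
  assert (Hx0 : comp (arr x) (zero (A0 b) T) = zero (A0 b) (A0 x))
    by apply comp_zero_l.
  set (al := null_cell b x w Hwb Hxw).
  set (be := null_cell b x (zero (A0 b) T) (comp_zero_l _ _ _ _ _) Hx0).
  assert (E : al = be).
  { apply (Hcf x _ _ al be), twocell_eq. simpl.
    rewrite Hwf, comp_zero_l. reflexivity. }
  change (tc al = tc be). rewrite E. reflexivity.
Qed.

End TwoArrows.

Theorem lemma3p4 (C : AbCat) (HC : enough_projectives C)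
  (a b : ArrC C) (f : ArrMor a b) :
  cofaithful_c f <-> epi (copair (m0 f) (arr b)).
Proof.
  split.
  - intro Hcf. apply copair_epi_iff. exact (cofaithful_kills Hcf).
  - apply cofaithful_of_copair_epi.
Qed.
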